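(* The ballean $(\omega,\mathfrak{M}_\omega)$ does not have bounded growth.
   Context: A ballean $(X,\mathcal{E})$ is a set with a coarse structure. $E[x]=\{y:(x,y)\in E\}$. $Y$ is bounded if $Y\subseteq E[x]$ for some $x$ and $E\in\mathcal{E}$; $\mathcal{B}_X$ is the family of bounded sets. $(X,\mathcal{E})$ has bounded growth if there is a map $f:X\to\mathcal{B}_X$ such that $\bigcup_{x\in B}f(x)\in\mathcal{B}_X$ for every $B\in\mathcal{B}_X$, and for every $E\in\mathcal{E}$ there is $C\in\mathcal{B}_X$ with $E[x]\subseteq f(x)$ for all $x\in X\setminus C$. $\mathfrak{M}_\omega$ is the coarse structure on $\omega$ with base $\{M_{\mathcal{P}}\}$, where $\mathcal{P}$ ranges over coverings of $\omega$ by finite sets such that for each $x\in\omega$ the set $\bigcup\{P'\in\mathcal{P}:x\in P'\}$ is finite, and $M_{\mathcal{P}}=\{(x,y):x,y\in P\text{ for some }P\in\mathcal{P}\}$; its bounded sets are the finite subsets of $\omega$. *)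

From Stdlib Require Import List.

Definition ball {X : Type} (E : X -> X -> Prop) (x : X) : X -> Prop :=
  fun y => E x y.

Definition bounded {X : Type} (calE : (X -> X -> Prop) -> Prop)
  (Y : X -> Prop) : Prop :=
  exists (x : X) (E : X -> X -> Prop), calE E /\ forall y, Y y -> ball E x y.

Definition bounded_growth {X : Type} (calE : (X -> X -> Prop) -> Prop) : Prop :=
  exists f : X -> (X -> Prop),
    (forall x, bounded calE (f x)) /\
    (forall B, bounded calE B ->
       bounded calE (fun y => exists x, B x /\ f x y)) /\
    (forall E, calE E ->
       exists C, bounded calE C /\
         forall x, ~ C x -> forall y, ball E x y -> f x y).

Definition finite_set (S : nat -> Prop) : Prop :=
  exists l : list nat, forall y, S y -> In y l.

Definition admissible_cover (P : (nat -> Prop) -> Prop) : Prop :=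
  (forall A, P A -> finite_set A) /\
  (forall x, exists A, P A /\ A x) /\
  (forall x, finite_set (fun y => exists A, P A /\ A x /\ A y)).

Definition M_of (P : (nat -> Prop) -> Prop) (x y : nat) : Prop :=
  exists A, P A /\ A x /\ A y.

Definition M_omega (E : nat -> nat -> Prop) : Prop :=
  exists P, admissible_cover P /\ forall x y, E x y -> M_of P x y.

From Stdlib Require Import List Lia IndefiniteDescription.

(* Bounded sets of (omega, M_omega) are finite, so a bounded-growth map gives a
   bound g x on f x.  With h x := x + g x, the pairs {x, h x} form an admissible
   cover, so the graph of h is an entourage; but h x lies outside f x for every
   x, whereas bounded growth would put h x into f x for all large x. *)

Lemma finite_set_bounded_above (A : nat -> Prop) :
  finite_set A -> exists n, forall y, A y -> y < n.
Proof.
  intros [l Hl]. exists (S (list_max l)). intros y Hy.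
  assert (Hmax := proj1 (list_max_le l (list_max l)) (le_n _)).
  rewrite Forall_forall in Hmax. specialize (Hmax y (Hl y Hy)). lia.
Qed.

Lemma M_omega_bounded_above (Y : nat -> Prop) :
  bounded M_omega Y -> exists n, forall y, Y y -> y < n.
Proof.
  intros [z [E [[P [[_ [_ Hstar]] HEP]] HY]]].
  destruct (finite_set_bounded_above _ (Hstar z)) as [n Hn].
  exists n. intros y Hy. apply Hn, HEP, HY, Hy.
Qed.

Definition pair_cover (h : nat -> nat) (A : nat -> Prop) : Prop :=
  exists x, A = fun y => y = x \/ y = h x.

(* The hypothesis [x <= h x] makes the cover locally finite: a pair {z, h z}
   can only contain x when z <= x. *)
Lemma pair_cover_admissible (h : nat -> nat) :
  (forall x, x <= h x) -> admissible_cover (pair_cover h).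
Proof.
  intros Hh. split; [|split].
  - intros A [x ->]. exists (x :: h x :: nil). intros y [-> | ->]; simpl; auto.
  - intro x. exists (fun y => y = x \/ y = h x). split; [exists x; reflexivity | auto].
  - intro x. exists (h x :: seq 0 (S x)).
    intros y [A [[z ->] [Hx Hy]]]. specialize (Hh z).
    destruct Hx as [-> | ->], Hy as [-> | ->]; simpl; rewrite ?in_seq; lia.
Qed.

Lemma M_omega_graph (h : nat -> nat) :
  (forall x, x <= h x) -> M_omega (fun x y => y = h x).
Proof.
  intros Hh. exists (pair_cover h). split; [exact (pair_cover_admissible h Hh)|].
  intros x y ->. exists (fun y => y = x \/ y = h x).
  split; [exists x; reflexivity | auto].
Qed.

Theorem mainTheorem12 : ~ bounded_growth M_omega.
Proof.
  intros [f [Hf_bounded [_ Hf_eventually]]].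
  destruct (functional_choice (fun x n => forall y, f x y -> y < n))
    as [g Hg].
  { intro x. exact (M_omega_bounded_above _ (Hf_bounded x)). }
  set (h x := x + g x).
  assert (Hh : forall x, x <= h x) by (intro; unfold h; lia).
  destruct (Hf_eventually _ (M_omega_graph h Hh)) as [C [HC HfC]].
  destruct (M_omega_bounded_above _ HC) as [n Hn].
  assert (HnC : ~ C n) by (intro Hc; specialize (Hn n Hc); lia).
  specialize (Hg n _ (HfC n HnC (h n) eq_refl)). unfold h in Hg. lia.
Qed.
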